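(* Let $X$ be a real Banach lattice equipped with a sufficiently rich topology $\tau$. If $C\subseteq X_+$ is $\tau$-compact, then its solid hull $\operatorname{so}(C)$ is $\tau$-closed.
   Context: A locally convex Hausdorff topology $\tau$ on a Banach lattice $X$ is called sufficiently rich if (i) the space $X^\tau$ of $\tau$-continuous linear functionals on $X$ is a Banach lattice (with lattice operations given by the Riesz–Kantorovich formulas), and (ii) $X_+$ is $\tau$-closed. $\operatorname{so}(C)$ is the set of all $z\in X$ for which there exists $x\in C$ with $|z|\le|x|$ (the smallest solid set containing $C$). *)

From Stdlib Require Import Reals List.
Open Scope R_scope.

Definition IsLub {V : Type} (S : V -> Prop) (le : V -> V -> Prop) (x y z : V) : Prop :=
  S z /\ le x z /\ le y z /\ (forall w, S w -> le x w -> le y w -> le z w).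

Record IsBanachLattice {V : Type} (S : V -> Prop) (zero : V)
    (add : V -> V -> V) (opp : V -> V) (scal : R -> V -> V)
    (le : V -> V -> Prop) (N : V -> R) : Prop := {
  bl_S0 : S zero;
  bl_Sadd : forall x y, S x -> S y -> S (add x y);
  bl_Sopp : forall x, S x -> S (opp x);
  bl_Sscal : forall a x, S x -> S (scal a x);
  bl_addA : forall x y z, S x -> S y -> S z -> add x (add y z) = add (add x y) z;
  bl_addC : forall x y, S x -> S y -> add x y = add y x;
  bl_add0 : forall x, S x -> add x zero = x;
  bl_addN : forall x, S x -> add x (opp x) = zero;
  bl_scalA : forall a b x, S x -> scal a (scal b x) = scal (a * b) x;
  bl_scal1 : forall x, S x -> scal 1 x = x;
  bl_scalDr : forall a x y, S x -> S y -> scal a (add x y) = add (scal a x) (scal a y);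
  bl_scalDl : forall a b x, S x -> scal (a + b) x = add (scal a x) (scal b x);
  bl_refl : forall x, S x -> le x x;
  bl_antisym : forall x y, S x -> S y -> le x y -> le y x -> x = y;
  bl_trans : forall x y z, S x -> S y -> S z -> le x y -> le y z -> le x z;
  bl_le_add : forall x y z, S x -> S y -> S z -> le x y -> le (add x z) (add y z);
  bl_le_scal : forall a x y, S x -> S y -> 0 <= a -> le x y -> le (scal a x) (scal a y);
  bl_lattice : forall x y, S x -> S y -> exists z, IsLub S le x y z;
  bl_norm0 : forall x, S x -> N x = 0 -> x = zero;
  bl_normZ : forall a x, S x -> N (scal a x) = Rabs a * N x;
  bl_normD : forall x y, S x -> S y -> N (add x y) <= N x + N y;
  (* lattice norm: |x| <= |y| implies ||x|| <= ||y|| *)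
  bl_lattice_norm : forall x y ax ay, S x -> S y ->
      IsLub S le x (opp x) ax -> IsLub S le y (opp y) ay -> le ax ay -> N x <= N y;
  bl_complete : forall u : nat -> V, (forall n, S (u n)) ->
      (forall eps, 0 < eps -> exists M, forall m n, (M <= m)%nat -> (M <= n)%nat ->
          N (add (u m) (opp (u n))) < eps) ->
      exists x, S x /\ forall eps, 0 < eps -> exists M, forall n, (M <= n)%nat ->
          N (add (u n) (opp x)) < eps
}.

Record BanachLattice := {
  car :> Type;
  bzero : car;
  badd : car -> car -> car;
  bopp : car -> car;
  bscal : R -> car -> car;
  ble : car -> car -> Prop;
  bsup : car -> car -> car;
  bnorm : car -> R;
  bl_axioms : IsBanachLattice (fun _ => True) bzero badd bopp bscal ble bnorm;
  bsup_lub : forall x y, IsLub (fun _ => True) ble x y (bsup x y)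
}.

Definition babs (X : BanachLattice) (x : X) : X := bsup X x (bopp X x).

Definition pos_cone (X : BanachLattice) : X -> Prop := fun x => ble X (bzero X) x.

Definition so (X : BanachLattice) (C : X -> Prop) : X -> Prop :=
  fun z => exists x, C x /\ ble X (babs X z) (babs X x).

Definition convex {X : BanachLattice} (U : X -> Prop) : Prop :=
  forall x y t, U x -> U y -> 0 <= t <= 1 ->
    U (badd X (bscal X t x) (bscal X (1 - t) y)).

Record LCHTopology (X : BanachLattice) := {
  topen : (X -> Prop) -> Prop;
  topen_full : topen (fun _ => True);
  topen_inter : forall U W, topen U -> topen W -> topen (fun x => U x /\ W x);
  topen_union : forall F : (X -> Prop) -> Prop, (forall U, F U -> topen U) ->
      topen (fun x => exists U, F U /\ U x);
  tadd_cont : forall U x y, topen U -> U (badd X x y) ->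
      exists V W, topen V /\ topen W /\ V x /\ W y /\
        forall v w, V v -> W w -> U (badd X v w);
  tscal_cont : forall U a x, topen U -> U (bscal X a x) ->
      exists d V, 0 < d /\ topen V /\ V x /\
        forall b v, Rabs (b - a) < d -> V v -> U (bscal X b v);
  tloc_convex : forall U, topen U -> U (bzero X) ->
      exists V, topen V /\ V (bzero X) /\ convex V /\ (forall v, V v -> U v);
  thausdorff : forall x y, x <> y -> exists U V, topen U /\ topen V /\ U x /\ V y /\
      (forall z, U z -> V z -> False)
}.

Arguments topen {X} l _.

Definition tclosed {X : BanachLattice} (T : LCHTopology X) (C : X -> Prop) : Prop :=
  topen T (fun x => ~ C x).

Definition tcompact {X : BanachLattice} (T : LCHTopology X) (C : X -> Prop) : Prop :=
  forall (J : Type) (U : J -> X -> Prop), (forall j, topen T (U j)) ->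
    (forall x, C x -> exists j, U j x) ->
    exists l : list J, forall x, C x -> exists j, In j l /\ U j x.

Definition linear_functional (X : BanachLattice) (f : X -> R) : Prop :=
  (forall x y, f (badd X x y) = f x + f y) /\ (forall a x, f (bscal X a x) = a * f x).

Definition tau_dual {X : BanachLattice} (T : LCHTopology X) (f : X -> R) : Prop :=
  linear_functional X f /\ (forall V, open_set V -> topen T (fun x => V (f x))).

Definition dual_le (X : BanachLattice) (f g : X -> R) : Prop :=
  forall x, pos_cone X x -> f x <= g x.

(* Riesz-Kantorovich set for (f v g)(x), x >= 0 *)
Definition RK_set (X : BanachLattice) (f g : X -> R) (x : X) : R -> Prop :=
  fun r => exists y, ble X (bzero X) y /\ ble X y x /\ r = f y + g (badd X x (bopp X y)).

Definition sufficiently_rich (X : BanachLattice) (T : LCHTopology X) : Prop :=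
  (* (i) X^tau is a Banach lattice whose lattice operations are given by the
     Riesz-Kantorovich formulas *)
  (exists N : (X -> R) -> R,
     IsBanachLattice (tau_dual T) (fun _ => 0) (fun f g x => f x + g x)
       (fun f x => - f x) (fun a f x => a * f x) (dual_le X) N /\
     (forall f g h, tau_dual T f -> tau_dual T g -> IsLub (tau_dual T) (dual_le X) f g h ->
        forall x, pos_cone X x -> is_lub (RK_set X f g x) (h x))) /\
  (* (ii) X_+ is tau-closed *)
  tclosed T (pos_cone X).

From Stdlib Require Import Reals List.
From Stdlib Require Import Classical FunctionalExtensionality PropExtensionality.
Open Scope R_scope.

(* For x >= 0 the inequality |z| <= |x| = x says exactly that
   -x <= z <= x, i.e. that both x - z and x + z lie in the positive cone X_+.
   Hence, when C is contained in X_+, z lies in so(C) iff some x in C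
   "dominates" z in this sense.  Since X_+ is tau-closed and addition and
   scalar multiplication are tau-continuous, the failure of domination is an
   open condition in the pair (x, z): if x does not dominate z, there are open
   sets V containing x and W containing z such that no v in V dominates any w
   in W.  Fixing z outside so(C), these neighbourhoods V cover the compact set
   C; a finite subcover yields a finite intersection N of the matching sets W,
   an open neighbourhood of z disjoint from so(C).  So the complement of so(C)
   is open.
   Only property (ii) of sufficiently rich topologies is needed. *)

Definition dominates (X : BanachLattice) (x z : X) : Prop :=
  pos_cone X (badd X x (bopp X z)) /\ pos_cone X (badd X x z).

Section LatticeFacts.
Variable X : BanachLattice.
Let A := bl_axioms X.
Notation add := (badd X).
Notation opp := (bopp X).
Notation le := (ble X).
Notation z0 := (bzero X).

Lemma addA x y z : add x (add y z) = add (add x y) z.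
Proof. exact (bl_addA _ _ _ _ _ _ _ A x y z I I I). Qed.
Lemma addC x y : add x y = add y x.
Proof. exact (bl_addC _ _ _ _ _ _ _ A x y I I). Qed.
Lemma add0 x : add x z0 = x.
Proof. exact (bl_add0 _ _ _ _ _ _ _ A x I). Qed.
Lemma add0l x : add z0 x = x.
Proof. rewrite addC; apply add0. Qed.
Lemma addN x : add x (opp x) = z0.
Proof. exact (bl_addN _ _ _ _ _ _ _ A x I). Qed.
Lemma addNl x : add (opp x) x = z0.
Proof. rewrite addC; apply addN. Qed.
Lemma le_add x y z : le x y -> le (add x z) (add y z).
Proof. exact (bl_le_add _ _ _ _ _ _ _ A x y z I I I). Qed.
Lemma le_trans x y z : le x y -> le y z -> le x z.
Proof. exact (bl_trans _ _ _ _ _ _ _ A x y z I I I). Qed.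
Lemma le_refl x : le x x.
Proof. exact (bl_refl _ _ _ _ _ _ _ A x I). Qed.

Lemma le_iff_sub_pos a b : le a b <-> pos_cone X (add b (opp a)).
Proof.
  unfold pos_cone; split; intro H.
  - rewrite <- (addN a). now apply le_add.
  - apply (le_add _ _ a) in H.
    now rewrite add0l, <- addA, addNl, add0 in H.
Qed.

Lemma opp_le_iff_add_pos x z : le (opp z) x <-> pos_cone X (add x z).
Proof.
  unfold pos_cone; split; intro H.
  - apply (le_add _ _ z) in H. now rewrite addNl in H.
  - apply (le_add _ _ (opp z)) in H.
    now rewrite add0l, <- addA, addN, add0 in H.
Qed.

Lemma abs_upper x : le x (babs X x) /\ le (opp x) (babs X x).
Proof. destruct (bsup_lub X x (opp x)) as [_ [H1 [H2 _]]]. now split. Qed.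

Lemma abs_least x y : le x y -> le (opp x) y -> le (babs X x) y.
Proof. intros H1 H2. destruct (bsup_lub X x (opp x)) as [_ [_ [_ H]]]. now apply H. Qed.

Lemma abs_le_of_pos x : pos_cone X x -> le (babs X x) x.
Proof.
  intro Hx. apply abs_least; [apply le_refl |].
  apply (le_trans _ z0); [| exact Hx].
  apply (le_add _ _ (opp x)) in Hx. now rewrite add0l, addN in Hx.
Qed.

Lemma abs_le_abs_pos_iff x z :
  pos_cone X x -> le (babs X z) (babs X x) <-> dominates X x z.
Proof.
  intro Hx. unfold dominates.
  rewrite <- le_iff_sub_pos, <- opp_le_iff_add_pos.
  destruct (abs_upper z) as [Hz Hoz]. split.
  - intro H. pose proof (le_trans _ _ _ H (abs_le_of_pos x Hx)) as Hzx.
    split; eapply le_trans; eauto.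
  - intros [H1 H2]. apply (le_trans _ x); [now apply abs_least | apply abs_upper].
Qed.

Lemma so_pos_iff (C : X -> Prop) z :
  (forall x, C x -> pos_cone X x) ->
  so X C z <-> exists x, C x /\ dominates X x z.
Proof.
  intro HC; split; intros [x [Cx H]]; exists x; split; auto.
  - now apply (abs_le_abs_pos_iff x z (HC x Cx)).
  - now apply (abs_le_abs_pos_iff x z (HC x Cx)).
Qed.

Lemma opp_scal x : opp x = bscal X (-1) x.
Proof.
  assert (Hs0 : bscal X 0 x = z0).
  { assert (H : add (bscal X 0 x) (bscal X 0 x) = bscal X 0 x).
    { rewrite <- (bl_scalDl _ _ _ _ _ _ _ A 0 0 x I). f_equal; ring. }
    rewrite <- (add0 (bscal X 0 x)), <- (addN (bscal X 0 x)), addA, H.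
    reflexivity. }
  assert (Hsum : add (bscal X (-1) x) x = z0).
  { rewrite <- (bl_scal1 _ _ _ _ _ _ _ A x I) at 2.
    rewrite <- (bl_scalDl _ _ _ _ _ _ _ A (-1) 1 x I).
    replace (-1 + 1) with 0 by ring. exact Hs0. }
  rewrite <- (add0 (bscal X (-1) x)), <- (addN x), addA, Hsum, add0l.
  reflexivity.
Qed.

End LatticeFacts.

Section TopologyFacts.
Variable X : BanachLattice.
Variable T : LCHTopology X.

Lemma topen_ext (U W : X -> Prop) :
  (forall x, U x <-> W x) -> topen T U -> topen T W.
Proof.
  intros HUW HU.
  replace W with U; [exact HU |].
  apply functional_extensionality; intro x.
  apply propositional_extensionality, HUW.
Qed.

Lemma topen_list_inter (J : Type) (l : list J) (W : J -> X -> Prop) :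
  (forall j, topen T (W j)) -> topen T (fun z => forall j, In j l -> W j z).
Proof.
  intro HW. induction l as [| j l IH].
  - apply (topen_ext (fun _ => True)); [simpl; tauto | apply topen_full].
  - apply (topen_ext (fun z => W j z /\ (forall i, In i l -> W i z))).
    + intro z; simpl; split.
      * intros [Hj Hl] i [<- | Hi]; auto.
      * intro H; split; auto.
    + now apply topen_inter.
Qed.

Lemma topen_local (S : X -> Prop) :
  (forall z, S z -> exists N, topen T N /\ N z /\ forall y, N y -> S y) ->
  topen T S.
Proof.
  intro Hloc.
  apply (topen_ext (fun z => exists N, (topen T N /\ forall y, N y -> S y) /\ N z)).
  - intro z; split.
    + intros [N [[_ HN] Nz]]. now apply HN.
    + intro Sz. destruct (Hloc z Sz) as [N [oN [Nz HN]]]. eauto.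
  - apply topen_union. now intros N [oN _].
Qed.

(* Tube lemma: if every point x of a compact set C and a fixed z have
   neighbourhoods V, W with no pair in V x W related by R, then some single
   neighbourhood of z contains no point related to a point of C. *)
Lemma compact_avoid (C : X -> Prop) (R : X -> X -> Prop) (z : X) :
  tcompact T C ->
  (forall x, C x -> exists V W, topen T V /\ topen T W /\ V x /\ W z /\
                     forall v w, V v -> W w -> ~ R v w) ->
  exists N, topen T N /\ N z /\ forall w x, N w -> C x -> ~ R x w.
Proof.
  intros HC Hsep.
  set (J := { p : (X -> Prop) * (X -> Prop) |
              topen T (fst p) /\ topen T (snd p) /\ snd p z /\
              forall v w, fst p v -> snd p w -> ~ R v w }).
  destruct (HC J (fun j => fst (proj1_sig j))) as [l Hl].
  - intros [p Hp]. exact (proj1 Hp).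
  - intros x Cx.
    destruct (Hsep x Cx) as [V [W [oV [oW [Vx [Wz HVW]]]]]].
    now exists (exist _ (V, W) (conj oV (conj oW (conj Wz HVW)))).
  - exists (fun w => forall j, In j l -> snd (proj1_sig j) w).
    split; [| split].
    + apply topen_list_inter. intros [p Hp]. exact (proj1 (proj2 Hp)).
    + intros [p Hp] _. exact (proj1 (proj2 (proj2 Hp))).
    + intros w x Nw Cx HR.
      destruct (Hl x Cx) as [[p Hp] [Hin Vx]].
      exact (proj2 (proj2 (proj2 Hp)) x w Vx (Nw _ Hin) HR).
Qed.

Lemma tsub_cont (O : X -> Prop) (x z : X) :
  topen T O -> O (badd X x (bopp X z)) ->
  exists V W, topen T V /\ topen T W /\ V x /\ W z /\
    forall v w, V v -> W w -> O (badd X v (bopp X w)).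
Proof.
  intros oO Hxz.
  destruct (tadd_cont X T O x _ oO Hxz) as [V [W [oV [oW [Vx [Wz HVW]]]]]].
  rewrite opp_scal in Wz.
  destruct (tscal_cont X T W (-1) z oW Wz) as [d [N [dpos [oN [Nz HN]]]]].
  exists V, N; repeat split; auto.
  intros v w Vv Nw. apply HVW; [exact Vv |].
  rewrite opp_scal. apply HN; [| exact Nw].
  now rewrite Rminus_diag, Rabs_R0.
Qed.

End TopologyFacts.

Lemma not_dominates_open (X : BanachLattice) (T : LCHTopology X) (x z : X) :
  tclosed T (pos_cone X) -> ~ dominates X x z ->
  exists V W, topen T V /\ topen T W /\ V x /\ W z /\
    forall v w, V v -> W w -> ~ dominates X v w.
Proof.
  unfold tclosed, dominates. intros Hcl Hxz.
  destruct (classic (pos_cone X (badd X x (bopp X z)))) as [Hsub | Hsub].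
  - assert (Hadd : ~ pos_cone X (badd X x z)) by tauto.
    destruct (tadd_cont X T _ x z Hcl Hadd) as [V [W [oV [oW [Vx [Wz HVW]]]]]].
    exists V, W; repeat split; auto.
    intros v w Vv Ww [_ Hvw]. exact (HVW v w Vv Ww Hvw).
  - destruct (tsub_cont X T _ x z Hcl Hsub) as [V [W [oV [oW [Vx [Wz HVW]]]]]].
    exists V, W; repeat split; auto.
    intros v w Vv Ww [Hvw _]. exact (HVW v w Vv Ww Hvw).
Qed.

Theorem mainTheorem10 (X : BanachLattice) (T : LCHTopology X)
    (Hrich : sufficiently_rich X T) (C : X -> Prop)
    (HCpos : forall x, C x -> pos_cone X x) (HCcomp : tcompact T C) :
  tclosed T (so X C).
Proof.
  destruct Hrich as [_ Hcl].
  apply topen_local. intros z Hz.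
  destruct (compact_avoid X T C (dominates X) z HCcomp) as [N [oN [Nz HN]]].
  - intros x Cx. apply not_dominates_open; [exact Hcl |].
    intro Hxz. apply Hz, so_pos_iff; eauto.
  - exists N; repeat split; auto.
    intros w Nw Hw. apply so_pos_iff in Hw as [x [Cx Hxw]]; [| exact HCpos].
    exact (HN w x Nw Cx Hxw).
Qed.
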